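(* Let $A$ be a group with finite presentation $\langle\mathcal A:\mathcal R\rangle$, $\phi:F(\mathcal A)\to F(\mathcal A)$ a homomorphism inducing a monomorphism of $A$, and $G$ the ascending HNN extension with presentation $\mathcal P=\langle t,\mathcal A:\mathcal R,\ t^{-1}at=\phi(a)\ (a\in\mathcal A)\rangle$ (stable letter $t$, base $A$). Let $X$ be the Cayley 2-complex of $\mathcal P$. If $M,N\ge0$ are integers and $\alpha$ is a loop in $X-t^NA\cdot Q(M)$, where $t^NA\cdot Q(M)=\{t^Nat^{-m}:a\in A,\ 0\le m\le M\}$ ($=(t^NAt^{-N})\cdot t^N\{1,t^{-1},\dots,t^{-M}\}$), then $\alpha$ is homotopically trivial in $X-t^NA\cdot Q(M)$.
   Context: $\mathcal A$ is finite, $\mathcal R\subset F(\mathcal A)$ finite. The Cayley 2-complex $X$ is the simply connected 2-complex with vertex set $G$, 1-skeleton the Cayley graph of $G$ with respect to $\mathcal A\cup\{t\}$, and a 2-cell at each vertex for each relator of $\mathcal P$. $X-S$ denotes the complement in $X$ of the vertex set $S$. *)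

From mathcomp Require Import all_boot.
Set Implicit Arguments. Unset Strict Implicit. Unset Printing Implicit Defensive.

(* A letter is a generator together with a flag: [false] = x, [true] = x^-1. *)
Definition letter (T : Type) := (T * bool)%type.
Definition word (T : Type) := seq (letter T).

Definition invl {T : Type} (x : letter T) : letter T := (x.1, ~~ x.2).
Definition invw {T : Type} (w : word T) : word T := rev (map invl w).

Inductive pres_eq {T : eqType} (rels : seq (word T)) : word T -> word T -> Prop :=
| pe_refl u : pres_eq rels u u
| pe_sym u v : pres_eq rels u v -> pres_eq rels v u
| pe_trans u v w : pres_eq rels u v -> pres_eq rels v w -> pres_eq rels u w
| pe_free u v x : pres_eq rels (u ++ [:: x; invl x] ++ v) (u ++ v)
| pe_rel u v r : r \in rels -> pres_eq rels (u ++ r ++ v) (u ++ v).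

Definition hom_word {T : Type} (phi : T -> word T) (w : word T) : word T :=
  flatten (map (fun x : letter T => if x.2 then invw (phi x.1) else phi x.1) w).

Definition induces_mono {T : eqType} (R : seq (word T)) (phi : T -> word T) : Prop :=
  (forall u v, pres_eq R u v -> pres_eq R (hom_word phi u) (hom_word phi v)) /\
  (forall u v, pres_eq R (hom_word phi u) (hom_word phi v) -> pres_eq R u v).

(* Generators of the HNN presentation: [None] is the stable letter t,
   [Some a] is a in the generating set of A. *)
Definition hgen (T : Type) := option T.
Definition liftw {T : Type} (w : word T) : word (hgen T) :=
  map (fun x : letter T => (Some x.1, x.2)) w.

Definition hnn_rels {T : finType} (R : seq (word T)) (phi : T -> word T)
  : seq (word (hgen T)) :=
  map liftw R ++
  [seq [:: (None, true); (Some a, false); (None, false)] ++ invw (liftw (phi a))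
  | a <- enum T].

Definition geq {T : finType} (R : seq (word T)) (phi : T -> word T) :=
  pres_eq (hnn_rels R phi).

Definition tpow {T : Type} (n : nat) (inv : bool) : word (hgen T) :=
  nseq n (None, inv).

Definition in_S {T : finType} (R : seq (word T)) (phi : T -> word T)
  (M N : nat) (g : word (hgen T)) : Prop :=
  exists (a : word T) (m : nat), m <= M /\
    geq R phi g (tpow N false ++ liftw a ++ tpow m true).

(* Boundary words of 2-cells of the Cayley complex read from any of their
   vertices, in either orientation. *)
Definition face_word {T : finType} (R : seq (word T)) (phi : T -> word T)
  (u : word (hgen T)) : Prop :=
  exists (r : word (hgen T)) (k : nat),
    (r \in hnn_rels R phi \/ invw r \in hnn_rels R phi) /\
    u = rot k r.

(* Elementary combinatorial homotopies of an edge path starting at vertex g,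
   staying inside X - S: removal of a backtrack whose tip avoids S, and
   removal of the boundary of a 2-cell all of whose vertices avoid S. *)
Inductive htpy_step {T : finType} (R : seq (word T)) (phi : T -> word T)
  (S : word (hgen T) -> Prop) (g : word (hgen T))
  : word (hgen T) -> word (hgen T) -> Prop :=
| hs_back u v x : ~ S (g ++ u ++ [:: x]) ->
    htpy_step R phi S g (u ++ [:: x; invl x] ++ v) (u ++ v)
| hs_face u v r : face_word R phi r ->
    (forall k, k <= size r -> ~ S (g ++ u ++ take k r)) ->
    htpy_step R phi S g (u ++ r ++ v) (u ++ v).

Inductive htpy {T : finType} (R : seq (word T)) (phi : T -> word T)
  (S : word (hgen T) -> Prop) (g : word (hgen T))
  : word (hgen T) -> word (hgen T) -> Prop :=
| ht_refl w : htpy R phi S g w w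
| ht_step w1 w2 : htpy_step R phi S g w1 w2 -> htpy R phi S g w1 w2
| ht_sym w1 w2 : htpy R phi S g w1 w2 -> htpy R phi S g w2 w1
| ht_trans w1 w2 w3 : htpy R phi S g w1 w2 -> htpy R phi S g w2 w3 ->
    htpy R phi S g w1 w3.

Definition loop_avoiding {T : finType} (R : seq (word T)) (phi : T -> word T)
  (S : word (hgen T) -> Prop) (g w : word (hgen T)) : Prop :=
  geq R phi (g ++ w) g /\ (forall k, k <= size w -> ~ S (g ++ take k w)).

From Pilot Require Import Defs.
From mathcomp Require Import all_boot zify.
Set Implicit Arguments. Unset Strict Implicit. Unset Printing Implicit Defensive.

(* Only two facts about S = t^N A . Q(M) matter: it is a union of cosets gA
   (since t^-m a = phi^m(a) t^-m), and phi is injective on A.  Using the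
   2-cells t^-1 a t = phi(a), an edge path w from g is homotoped in X - S to a
   normal form t^i X t^-j with X a word in A: letters of A move right past t,
   and t^-1 moves right past letters of A.  Every vertex created on the way
   lies in a coset pA of a vertex p already known to avoid S.  If w is a loop,
   injectivity of phi forces j = i and X = 1 in A, so the normal form
   contracts inside the coset of g t^i and back along the path t^i. *)

Section Words.
Variable T : Type.
Implicit Types (x : letter T) (u v w : word T).

Lemma invlK : involutive (@invl T).
Proof. by case=> a b; rewrite /invl /= negbK. Qed.

Lemma invwK : involutive (@invw T).
Proof. by move=> w; rewrite /invw map_rev revK -map_comp (eq_map invlK) map_id. Qed.

Lemma invw_cat u v : invw (u ++ v) = invw v ++ invw u.
Proof. by rewrite /invw map_cat rev_cat. Qed.

Lemma invw_cons x w : invw (x :: w) = invw w ++ [:: invl x].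
Proof. by rewrite /invw /= rev_cons cats1. Qed.

Lemma size_invw w : size (invw w) = size w.
Proof. by rewrite size_rev size_map. Qed.

Lemma take_invw k w : take k (invw w) = invw (drop (size w - k) w).
Proof. by rewrite /invw take_rev size_map -map_drop. Qed.

Lemma liftw_cat u v : liftw (u ++ v) = liftw u ++ liftw v.
Proof. exact: map_cat. Qed.

Lemma take_liftw k w : take k (liftw w) = liftw (take k w).
Proof. by rewrite /liftw map_take. Qed.

Lemma invw_liftw w : invw (liftw w) = liftw (invw w).
Proof. by rewrite /invw /liftw map_rev -!map_comp; congr rev; apply: eq_map => -[]. Qed.

Lemma invw_tpow n : invw (tpow n false) = tpow n true :> word (hgen T).
Proof. by rewrite /invw /tpow map_nseq rev_nseq. Qed.

Lemma tpowS n b : tpow n.+1 b = [:: (None, b)] ++ tpow n b :> word (hgen T).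
Proof. by []. Qed.

Variable phi : T -> word T.

Lemma hom_cat u v : hom_word phi (u ++ v) = hom_word phi u ++ hom_word phi v.
Proof. by rewrite /hom_word map_cat flatten_cat. Qed.

Lemma hom_invw w : hom_word phi (invw w) = invw (hom_word phi w).
Proof.
elim: w => [|[a b] w IH] //.
rewrite invw_cons hom_cat IH [hom_word _ (_ :: _)]/hom_word /= invw_cat.
by case: b; rewrite /hom_word /= ?invwK cats0.
Qed.

End Words.

Definition homn (T : Type) (phi : T -> word T) (n : nat) : word T -> word T :=
  iter n (hom_word phi).

Section IteratedHom.
Variables (T : Type) (phi : T -> word T).
Implicit Types (u v w : word T).

Lemma homn_cat n u v : homn phi n (u ++ v) = homn phi n u ++ homn phi n v.
Proof. by elim: n => //= n IH; rewrite IH hom_cat. Qed.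

Lemma homn_invw n w : homn phi n (invw w) = invw (homn phi n w).
Proof. by elim: n => //= n IH; rewrite IH hom_invw. Qed.

Lemma homn_nil n : homn phi n [::] = [::].
Proof. by elim: n => //= n ->. Qed.

Lemma homnD m n w : homn phi m (homn phi n w) = homn phi (m + n) w.
Proof. by rewrite /homn iterD. Qed.

Lemma homnS n w : homn phi n.+1 w = hom_word phi (homn phi n w).
Proof. by []. Qed.

Lemma homnSr n w : homn phi n.+1 w = homn phi n (hom_word phi w).
Proof. by rewrite /homn iterSr. Qed.

End IteratedHom.

Section PresEq.
Variables (T : eqType) (rels : seq (word T)).
Notation "u ~ v" := (pres_eq rels u v) (at level 70).
Implicit Types (u v w y : word T).

Lemma pe_ctx a b u v : u ~ v -> a ++ u ++ b ~ a ++ v ++ b.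
Proof.
elim=> {u v} [u|u v _ /pe_sym //|u v w _ H1 _ H2|u v x|u v r Hr].
- exact: pe_refl.
- exact: pe_trans H2.
- by have := pe_free rels (a ++ u) (v ++ b) x; rewrite -!catA.
- by have := pe_rel (a ++ u) (v ++ b) Hr; rewrite -!catA.
Qed.

Lemma pe_ctxl a u v : u ~ v -> a ++ u ~ a ++ v.
Proof. by move/(pe_ctx a [::]); rewrite !cats0. Qed.

Lemma pe_ctxr b u v : u ~ v -> u ++ b ~ v ++ b.
Proof. exact: pe_ctx [::] b u v. Qed.

Lemma pe_cancel y : y ++ invw y ~ [::].
Proof.
elim: y => [|x y IH]; first exact: pe_refl.
have -> : (x :: y) ++ invw (x :: y) = [:: x] ++ (y ++ invw y) ++ [:: invl x].
  by rewrite invw_cons /= catA.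
apply: pe_trans (pe_ctx [:: x] [:: invl x] IH) _.
exact: pe_free rels [::] [::] x.
Qed.

Lemma pe_cancel_inv y : invw y ++ y ~ [::].
Proof. by rewrite -{2}(invwK y); apply: pe_cancel. Qed.

Lemma pe_cancel_ctx a b y : a ++ (y ++ invw y) ++ b ~ a ++ b.
Proof. by have := pe_ctx a b (pe_cancel y). Qed.

Lemma pe_cancell a u v : a ++ u ~ a ++ v -> u ~ v.
Proof.
have cancel_a w : invw a ++ a ++ w ~ w.
  by have := pe_ctxr w (pe_cancel_inv a); rewrite catA.
move/(pe_ctxl (invw a)) => H.
exact: pe_trans (pe_sym (cancel_a u)) (pe_trans H (cancel_a v)).
Qed.

Lemma pe_eq_cat_invw u v : u ++ invw v ~ [::] -> u ~ v.
Proof.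
move/(pe_ctxr v); rewrite -catA /= => H.
apply: pe_trans H; apply: pe_sym.
by have := pe_ctxl u (pe_cancel_inv v); rewrite cats0.
Qed.

Lemma pe_rot u v : u ++ v ~ [::] -> v ++ u ~ [::].
Proof.
move=> H; apply: pe_trans _ (pe_cancel v).
apply: pe_trans _ (pe_ctx v (invw v) H); apply: pe_sym.
by have := pe_cancel_ctx (v ++ u) [::] v; rewrite !cats0 -!catA.
Qed.

Lemma pe_invw y : y ~ [::] -> invw y ~ [::].
Proof.
move=> H; apply: pe_trans (pe_cancel_inv y).
by apply: pe_sym; have := pe_ctxl (invw y) H; rewrite cats0.
Qed.

Lemma pe_mem r : r \in rels -> r ~ [::].
Proof. by move=> Hr; have := pe_rel [::] [::] Hr; rewrite cats0. Qed.

End PresEq.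

Section NormalForm.
Variables (T : finType) (R : seq (word T)) (phi : T -> word T).
Hypothesis Hphi : induces_mono R phi.
Notation "u ~ v" := (pres_eq R u v) (at level 70).
Implicit Types (u v X : word T) (s : nat * word T * nat).

Lemma homn_pe n u v : u ~ v -> homn phi n u ~ homn phi n v.
Proof. by elim: n => //= n IH /IH; apply: Hphi.1. Qed.

Lemma homn_pe_inv n u v : homn phi n u ~ homn phi n v -> u ~ v.
Proof. by elim: n => //= n IH /Hphi.2 /IH. Qed.

(* The triple (i, X, j) stands for t^i X t^-j; [nf_cons x] multiplies it by x
   on the left, using t^-1 X = phi(X) t^-1 when no t is left to cancel. *)
Definition nf_cons (x : letter (hgen T)) s : nat * word T * nat :=
  let: (i, X, j) := s in
  match x with
  | (None, false) => (i.+1, X, j)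
  | (None, true) => if i is i'.+1 then (i', X, j) else (0, hom_word phi X, j.+1)
  | (Some a, b) => (i, homn phi i [:: (a, b)] ++ X, j)
  end.

Definition nf (w : word (hgen T)) : nat * word T * nat :=
  foldr nf_cons (0, [::], 0) w.

(* Multiplying t^i X t^-j = t^i' X' t^-j' on the left by t^-(i + i') gives
   phi^i'(X) t^-(i' + j) = phi^i(X') t^-(i + j'). *)
Definition nf_eq s s' : Prop :=
  let: (i, X, j) := s in let: (i', X', j') := s' in
  i + j' = i' + j /\ homn phi i' X ~ homn phi i X'.

Lemma nf_eq_refl s : nf_eq s s.
Proof. by case: s => [[i X] j]; split=> //; apply: pe_refl. Qed.

Lemma nf_eq_sym s s' : nf_eq s s' -> nf_eq s' s.
Proof. by case: s s' => [[i X] j] [[i' X'] j'] [? /pe_sym]; split=> //; lia. Qed.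

Lemma nf_eq_trans s1 s2 s3 : nf_eq s1 s2 -> nf_eq s2 s3 -> nf_eq s1 s3.
Proof.
case: s1 s2 s3 => [[i1 X1] j1] [[i2 X2] j2] [[i3 X3] j3] [E12 H12] [E23 H23].
split; first lia.
apply: (homn_pe_inv (n := i2)).
rewrite !homnD [i2 + i3]addnC [i2 + i1]addnC -!homnD.
apply: pe_trans (homn_pe i3 H12) _.
by rewrite homnD addnC -homnD; apply: homn_pe.
Qed.

Lemma nf_cons_eq x s s' : nf_eq s s' -> nf_eq (nf_cons x s) (nf_cons x s').
Proof.
case: s s' => [[i X] j] [[i' X'] j'] [E H].
case: x => [[a|] [|]] /=.
- by split=> //; rewrite !homn_cat !homnD addnC; apply: pe_ctxl.
- by split=> //; rewrite !homn_cat !homnD addnC; apply: pe_ctxl.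
- case: i i' E H => [|i] [|i'] E H /=; split; try lia.
  + exact: Hphi.1 H.
  + by rewrite -homnSr.
  + by rewrite -homnSr.
  + exact: Hphi.2 H.
- by split; [lia | apply: Hphi.1].
Qed.

Lemma foldr_nf_eq w s s' :
  nf_eq s s' -> nf_eq (foldr nf_cons s w) (foldr nf_cons s' w).
Proof. by elim: w => //= x w IH /IH /nf_cons_eq. Qed.

Lemma foldr_nf_cons_liftw i X j Z :
  foldr nf_cons (i, X, j) (liftw Z) = (i, homn phi i Z ++ X, j).
Proof.
elim: Z => [|[a b] Z IH] /=; first by rewrite homn_nil.
by rewrite IH /= catA -homn_cat.
Qed.

Lemma nf_cons_cancel x s : nf_eq (nf_cons x (nf_cons (invl x) s)) s.
Proof.
case: s => [[i X] j]; case: x => [[a|] b] /=.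
- split=> //; apply: homn_pe.
  rewrite -[[:: (a, ~~ b)]]/(invw [:: (a, b)]) homn_invw catA.
  exact: (pe_cancel_ctx R [::] X).
- by case: b; case: i => [|i] /=; split=> //; apply: pe_refl.
Qed.

Lemma nf_rel r s : r \in hnn_rels R phi -> nf_eq (foldr nf_cons s r) s.
Proof.
case: s => [[i X] j]; rewrite mem_cat => /orP [/mapP [r0 Hr0 ->]|/mapP [a _ ->]].
  rewrite foldr_nf_cons_liftw; split=> //; apply: homn_pe.
  have r0_nil : homn phi i r0 ~ [::].
    by rewrite -(homn_nil phi i); apply/homn_pe/pe_mem.
  by have := pe_ctxr X r0_nil.
rewrite foldr_cat invw_liftw foldr_nf_cons_liftw /=; split=> //; apply: homn_pe.
have hom_a : hom_word phi [:: (a, false)] = phi a by rewrite /hom_word /= cats0.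
rewrite -homnS homnSr hom_a.
by rewrite homn_invw catA; have := pe_cancel_ctx R [::] X (homn phi i (phi a)).
Qed.

Lemma nf_pe w1 w2 : pres_eq (hnn_rels R phi) w1 w2 -> nf_eq (nf w1) (nf w2).
Proof.
elim=> {w1 w2} [w|w1 w2 _ /nf_eq_sym //|w1 w2 w3 _ H1 _ H2|p q x|p q r Hr].
- exact: nf_eq_refl.
- exact: nf_eq_trans H2.
- by rewrite /nf !foldr_cat; apply: foldr_nf_eq; apply: nf_cons_cancel.
- by rewrite /nf !foldr_cat; apply: foldr_nf_eq; apply: nf_rel.
Qed.

End NormalForm.

Section HNNRelations.
Variables (T : finType) (R : seq (word T)) (phi : T -> word T).
Notation "u ~ v" := (Defs.geq R phi u v) (at level 70).
Local Notation t := ((None, false) : letter (hgen T)).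
Local Notation t' := ((None, true) : letter (hgen T)).

Definition phi_lift (a : T) (b : bool) : word (hgen T) :=
  liftw (hom_word phi [:: (a, b)]).

Lemma conj_rel_mem a :
  [:: t'; (Some a, false); t] ++ invw (liftw (phi a)) \in hnn_rels R phi.
Proof. by rewrite mem_cat; apply/orP; right; apply/mapP; exists a; rewrite ?mem_enum. Qed.

Lemma face_rot1 r : face_word R phi r -> face_word R phi (rot 1 r).
Proof.
move=> [r0 [k [Hr ->]]]; have [Hk|Hk] := leqP (size r0) k.
  by exists r0, 1; rewrite (rot_oversize Hk).
by exists r0, (1 + k); rewrite -rotD.
Qed.

Lemma face_down a b :
  face_word R phi ([:: t'; (Some a, b)] ++ invw (phi_lift a b ++ [:: t'])).
Proof.
rewrite invw_cat /= /phi_lift /hom_word /= cats0; case: b => /=.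
  exists (invw ([:: t'; (Some a, false); t] ++ invw (liftw (phi a)))).
  exists (size (liftw (phi a))); split; first by right; rewrite invwK conj_rel_mem.
  by rewrite invw_cat invwK -invw_liftw invwK rot_size_cat.
exists ([:: t'; (Some a, false); t] ++ invw (liftw (phi a))), 0.
by split; [left; apply: conj_rel_mem | rewrite rot0].
Qed.

Lemma face_up a b :
  face_word R phi ([:: (Some a, b); t] ++ invw ([:: t] ++ phi_lift a b)).
Proof.
have -> : [:: (Some a, b); t] ++ invw ([:: t] ++ phi_lift a b) =
          rot 1 ([:: t'; (Some a, b)] ++ invw (phi_lift a b ++ [:: t'])).
  by rewrite !invw_cat /= rot1_cons -cats1.
exact/face_rot1/face_down.
Qed.

Lemma face_pe r : face_word R phi r -> r ~ [::].
Proof.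
move=> [r0 [k [Hr ->]]]; apply: pe_rot; rewrite cat_take_drop.
by case: Hr => [|/pe_mem /pe_invw]; [apply: pe_mem | rewrite invwK].
Qed.

Lemma push_up a b : [:: (Some a, b); t] ~ [:: t] ++ phi_lift a b.
Proof. exact/pe_eq_cat_invw/face_pe/face_up. Qed.

Lemma push_down a b : [:: t'; (Some a, b)] ~ phi_lift a b ++ [:: t'].
Proof. exact/pe_eq_cat_invw/face_pe/face_down. Qed.

Lemma push_up_liftw Z : liftw Z ++ [:: t] ~ [:: t] ++ liftw (hom_word phi Z).
Proof.
elim: Z => [|[a b] Z IH]; first exact: pe_refl.
apply: pe_trans (pe_ctxl [:: (Some a, b)] IH) _.
rewrite -[(a, b) :: Z]cat1s hom_cat liftw_cat !catA.
by have := pe_ctxr (liftw (hom_word phi Z)) (push_up a b).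
Qed.

Lemma push_up_tpow n Z :
  liftw Z ++ tpow n false ~ tpow n false ++ liftw (homn phi n Z).
Proof.
elim: n Z => [|n IH] Z; first by rewrite cats0; apply: pe_refl.
rewrite homnSr !tpowS -catA.
apply: pe_trans (_ : [:: t] ++ liftw (hom_word phi Z) ++ tpow n false ~ _).
  by have := pe_ctxr (tpow n false) (push_up_liftw Z); rewrite -!catA.
exact/pe_ctxl/IH.
Qed.

Lemma push_down_liftw Z : [:: t'] ++ liftw Z ~ liftw (hom_word phi Z) ++ [:: t'].
Proof.
elim: Z => [|[a b] Z IH]; first exact: pe_refl.
rewrite -[(a, b) :: Z]cat1s hom_cat liftw_cat.
apply: pe_trans (pe_ctxr (liftw Z) (push_down a b)) _.
by rewrite -!catA; apply: pe_ctxl.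
Qed.

Lemma push_down_tpow n Z :
  tpow n true ++ liftw Z ~ liftw (homn phi n Z) ++ tpow n true.
Proof.
elim: n Z => [|n IH] Z; first by rewrite cats0; apply: pe_refl.
rewrite !tpowS -catA.
apply: pe_trans (pe_ctxl [:: t'] (IH Z)) _.
by have := pe_ctxr (tpow n true) (push_down_liftw (homn phi n Z)); rewrite -!catA.
Qed.

End HNNRelations.

Section Homotopy.
Variables (T : finType) (R : seq (word T)) (phi : T -> word T).
Variable S : word (hgen T) -> Prop.
Notation "u ~ v" := (Defs.geq R phi u v) (at level 70).
Notation htp := (htpy R phi S).
Local Notation t := ((None, false) : letter (hgen T)).
Local Notation t' := ((None, true) : letter (hgen T)).
Implicit Types (p q u v w : word (hgen T)) (Z : word T).

Lemma htpy_ctx g pre post u v :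
  htp (g ++ pre) u v -> htp g (pre ++ u ++ post) (pre ++ v ++ post).
Proof.
elim=> {u v} [w|w1 w2 []|w1 w2 _ /ht_sym //|w1 w2 w3 _ H1 _ H2].
- exact: ht_refl.
- move=> u v x Hx.
  have Hx' : ~ S (g ++ (pre ++ u) ++ [:: x]) by rewrite -!catA in Hx *.
  by have := ht_step (hs_back R phi (v ++ post) Hx'); rewrite -!catA.
- move=> u v r Hr Hk.
  have Hk' k : k <= size r -> ~ S (g ++ (pre ++ u) ++ take k r).
    by move/Hk; rewrite -!catA.
  by have := ht_step (hs_face (v ++ post) Hr Hk'); rewrite -!catA.
- exact: ht_trans H2.
Qed.

Lemma htpy_ctxl g pre u v : htp (g ++ pre) u v -> htp g (pre ++ u) (pre ++ v).
Proof. by move/(htpy_ctx [::]); rewrite !cats0. Qed.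

Lemma htpy_ctxr g post u v : htp g u v -> htp g (u ++ post) (v ++ post).
Proof. by rewrite -[g]cats0 => /(htpy_ctx post); rewrite cats0. Qed.

Definition path_avoids q w : Prop := forall k, k <= size w -> ~ S (q ++ take k w).

Lemma path_avoids_cons q x w :
  path_avoids q (x :: w) <-> ~ S q /\ path_avoids (q ++ [:: x]) w.
Proof.
split=> [Hw|[Hq Hw] [|k] Hk].
- split=> [|k Hk]; first by have := Hw 0 isT; rewrite cats0.
  by rewrite -catA; apply: (Hw k.+1).
- by rewrite cats0.
- by rewrite /= -cat1s catA; apply: Hw.
Qed.

Lemma path_avoids_nil q : ~ S q -> path_avoids q [::].
Proof. by move=> Hq [|]; rewrite ?cats0. Qed.

Lemma path_avoids_head q w : path_avoids q w -> ~ S q.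
Proof. by move/(_ 0 isT); rewrite take0 cats0. Qed.

Lemma path_avoids_cat q u v :
  path_avoids q u -> path_avoids (q ++ u) v -> path_avoids q (u ++ v).
Proof.
move=> Hu Hv k; rewrite size_cat take_cat; case: ltnP => Hk Hkuv.
  exact/Hu/ltnW.
by rewrite catA; apply: Hv; rewrite leq_subLR.
Qed.

Hypothesis S_geq : forall p q, p ~ q -> S p -> S q.
Hypothesis S_mulA : forall p Z, S p -> S (p ++ liftw Z).

Lemma avoids_geq p q : p ~ q -> ~ S p -> ~ S q.
Proof. by move=> Hpq Hp /(S_geq (pe_sym Hpq)). Qed.

Lemma avoids_mulA p Z : ~ S p -> ~ S (p ++ liftw Z).
Proof.
move=> Hp /(S_mulA (invw Z)); apply: avoids_geq Hp.
apply: pe_sym.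
have := pe_cancel_ctx (hnn_rels R phi) p [::] (liftw Z).
by rewrite !cats0 invw_liftw catA.
Qed.

Lemma path_avoids_geq p q w : p ~ q -> path_avoids p w -> path_avoids q w.
Proof. by move=> Hpq Hw k /Hw; apply: avoids_geq; apply: pe_ctxr. Qed.

Lemma path_avoids_liftw q Z : ~ S q -> path_avoids q (liftw Z).
Proof. by move=> Hq k _; rewrite take_liftw; apply: avoids_mulA. Qed.

Lemma path_avoids_invw q w : path_avoids q w -> path_avoids (q ++ w) (invw w).
Proof.
move=> Hw k; rewrite size_invw take_invw => _.
set n := size w - k; apply: avoids_geq (Hw n (leq_subr _ _)).
have := pe_cancel_ctx (hnn_rels R phi) (q ++ take n w) [::] (drop n w).
by rewrite !cats0 -!catA [take n w ++ _]catA cat_take_drop => /pe_sym.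
Qed.

Lemma path_avoids_tpow q n :
  path_avoids q (tpow n false) <-> forall k, k <= n -> ~ S (q ++ tpow k false).
Proof.
rewrite /path_avoids /tpow size_nseq.
by split=> Hn k Hk; have := Hn k Hk; rewrite take_nseq.
Qed.

Lemma path_avoids_tpow_liftw q Z n :
  path_avoids (q ++ liftw Z) (tpow n false) -> path_avoids q (tpow n false).
Proof.
move=> /path_avoids_tpow Hn; apply/path_avoids_tpow => k Hk.
move/(S_mulA (homn phi k Z)); apply: avoids_geq (Hn k Hk).
by rewrite -!catA; apply/pe_ctxl/push_up_tpow.
Qed.

Lemma htpy_cancel q y : path_avoids q y -> htp q (y ++ invw y) [::].
Proof.
elim: y q => [|x y IH] q; first by move=> _; apply: ht_refl.
case/path_avoids_cons => _ Hy.
have -> : (x :: y) ++ invw (x :: y) = [:: x] ++ (y ++ invw y) ++ [:: invl x].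
  by rewrite invw_cons /= catA.
apply: ht_trans (htpy_ctx (pre := [:: x]) [:: invl x] (IH _ Hy)) _.
exact/ht_step/(@hs_back _ R phi S q [::] [::] x (path_avoids_head Hy)).
Qed.

Lemma htpy_face q u v : face_word R phi (u ++ invw v) ->
  path_avoids q u -> path_avoids q v -> htp q u v.
Proof.
move=> Hf Hu Hv.
have Huv : q ++ u ~ q ++ v by apply/pe_ctxl/pe_eq_cat_invw/face_pe.
have Hvi : path_avoids (q ++ u) (invw v).
  exact: path_avoids_geq (pe_sym Huv) (path_avoids_invw Hv).
have remove_face : htp q ((u ++ invw v) ++ v) v.
  exact/ht_step/(@hs_face _ R phi S q [::] v _ Hf (path_avoids_cat Hu Hvi)).
have := htpy_ctx (pre := u) [::] (htpy_cancel Hvi).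
rewrite invwK !cats0 catA => /ht_sym insert_v.
exact: ht_trans insert_v remove_face.
Qed.

Lemma htpy_liftw q (u v : word T) :
  pres_eq R u v -> ~ S q -> htp q (liftw u) (liftw v).
Proof.
move=> Huv Hq; elim: Huv => {u v} [u|u v _ /ht_sym //|u v w _ H1 _ H2|u v x|u v r Hr].
- exact: ht_refl.
- exact: ht_trans H2.
- have Hx := avoids_mulA (Z := u ++ [:: x]) Hq; rewrite liftw_cat in Hx.
  by rewrite !liftw_cat; apply/ht_step/(hs_back R phi (liftw v) Hx).
- have Hlr : face_word R phi (liftw r).
    exists (liftw r), 0; rewrite rot0 /hnn_rels mem_cat (map_f _ Hr).
    by split; [left|].
  have Hk k : k <= size (liftw r) -> ~ S (q ++ liftw u ++ take k (liftw r)).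
    by move=> _; rewrite take_liftw -liftw_cat; apply: avoids_mulA.
  by rewrite !liftw_cat; apply/ht_step/(hs_face (liftw v) Hlr Hk).
Qed.

Lemma path_avoids1 q x : ~ S q -> ~ S (q ++ [:: x]) -> path_avoids q [:: x].
Proof. by move=> Hq Hqx [|[|k]] //= _; rewrite cats0. Qed.

Lemma avoids_push_up q a b : ~ S (q ++ [:: t]) -> ~ S (q ++ [:: (Some a, b); t]).
Proof.
move/(avoids_mulA (Z := hom_word phi [:: (a, b)])); rewrite -catA.
by apply: avoids_geq; apply/pe_ctxl/pe_sym/push_up.
Qed.

Lemma avoids_push_down q a b :
  ~ S (q ++ [:: t']) -> ~ S (q ++ phi_lift phi a b ++ [:: t']).
Proof.
move/(avoids_mulA (Z := [:: (a, b)])); rewrite -catA.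
by apply: avoids_geq; apply/pe_ctxl/push_down.
Qed.

Lemma htpy_push_up q a b : ~ S q -> ~ S (q ++ [:: t]) ->
  htp q [:: (Some a, b); t] ([:: t] ++ phi_lift phi a b).
Proof.
move=> Hq Hqt; apply: htpy_face (face_up R phi a b) _ _.
  have Hqa : ~ S (q ++ [:: (Some a, b)]) := avoids_mulA (Z := [:: (a, b)]) Hq.
  apply: (path_avoids_cat (u := [:: (Some a, b)])); first exact: path_avoids1.
  by apply: path_avoids1 => //; rewrite -catA; apply: avoids_push_up.
apply: path_avoids_cat (path_avoids1 Hq Hqt) _.
exact: (path_avoids_liftw (Z := hom_word phi [:: (a, b)])).
Qed.

Lemma htpy_push_down q a b : ~ S q -> ~ S (q ++ [:: t']) ->
  htp q [:: t'; (Some a, b)] (phi_lift phi a b ++ [:: t']).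
Proof.
move=> Hq Hqt; apply: htpy_face (face_down R phi a b) _ _.
  apply: (path_avoids_cat (u := [:: t'])); first exact: path_avoids1.
  by apply: path_avoids1 => //; apply: (avoids_mulA (Z := [:: (a, b)])).
apply: path_avoids_cat (path_avoids_liftw (Z := hom_word phi [:: (a, b)]) Hq) _.
by apply: path_avoids1; [apply: avoids_mulA | rewrite -catA; apply: avoids_push_down].
Qed.

Lemma htpy_push_up_liftw q Z : ~ S q -> ~ S (q ++ [:: t]) ->
  htp q (liftw Z ++ [:: t]) ([:: t] ++ liftw (hom_word phi Z)).
Proof.
elim: Z q => [|[a b] Z IH] q Hq Hqt; first exact: ht_refl.
have Hqa : ~ S (q ++ [:: (Some a, b)]) := avoids_mulA (Z := [:: (a, b)]) Hq.
have Hqat : ~ S ((q ++ [:: (Some a, b)]) ++ [:: t]).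
  by rewrite -catA; apply: avoids_push_up.
apply: ht_trans (htpy_ctxl (pre := [:: (Some a, b)]) (IH _ Hqa Hqat)) _.
rewrite -[(a, b) :: Z]cat1s hom_cat liftw_cat catA.
have := htpy_ctxr (liftw (hom_word phi Z)) (htpy_push_up a b Hq Hqt).
by rewrite -!catA.
Qed.

Lemma htpy_push_up_tpow q n Z : path_avoids q (tpow n false) ->
  htp q (liftw Z ++ tpow n false) (tpow n false ++ liftw (homn phi n Z)).
Proof.
elim: n q Z => [|n IH] q Z; first by rewrite cats0 => _; apply: ht_refl.
rewrite tpowS => /path_avoids_cons [Hq Hn].
apply: ht_trans (_ : htp q ([:: t] ++ liftw (hom_word phi Z) ++ tpow n false) _).
  have := htpy_ctxr (tpow n false) (htpy_push_up_liftw Z Hq (path_avoids_head Hn)).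
  by rewrite -!catA.
by rewrite homnSr -catA; apply/htpy_ctxl/IH.
Qed.

Lemma htpy_push_down_liftw q Z : ~ S q -> ~ S (q ++ [:: t']) ->
  htp q ([:: t'] ++ liftw Z) (liftw (hom_word phi Z) ++ [:: t']).
Proof.
elim: Z q => [|[a b] Z IH] q Hq Hqt; first exact: ht_refl.
apply: ht_trans (htpy_ctxr (liftw Z) (htpy_push_down a b Hq Hqt)) _.
rewrite -[(a, b) :: Z]cat1s hom_cat liftw_cat -!catA.
apply/htpy_ctxl/IH; first exact: avoids_mulA.
by rewrite -catA; apply: avoids_push_down.
Qed.

Lemma htpy_nf q w : path_avoids q w ->
  let: (i, X, j) := nf phi w in
  htp q w (tpow i false ++ liftw X ++ tpow j true) /\ path_avoids q (tpow i false).
Proof.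
elim: w q => [|x w IH] q; first by split=> //; apply: ht_refl.
case/path_avoids_cons => Hq Hxw.
rewrite [nf phi _]/= -/(nf phi w); have := IH _ Hxw.
case: (nf phi w) => [[i X] j] [Hnf Hi].
have Hx := htpy_ctxl (pre := [:: x]) Hnf.
case: x Hxw Hnf Hi Hx => [[a|] b] Hxw Hnf Hi Hx.
  have Hi' := path_avoids_tpow_liftw (Z := [:: (a, b)]) Hi.
  split=> //; apply: ht_trans Hx _.
  have := htpy_ctxr (liftw X ++ tpow j true) (htpy_push_up_tpow [:: (a, b)] Hi').
  by rewrite liftw_cat -!catA.
case: b Hxw Hnf Hi Hx => Hxw Hnf Hi Hx; last by split=> //; apply/path_avoids_cons.
case: i Hnf Hi Hx => [|i] Hnf Hi Hx.
  split; last exact: path_avoids_nil.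
  apply: ht_trans Hx _.
  have := htpy_ctxr (tpow j true) (htpy_push_down_liftw X Hq (path_avoids_head Hxw)).
  by rewrite -!catA.
split.
  apply: ht_trans Hx (ht_step _).
  exact: (@hs_back _ R phi S q [::] _ t' (path_avoids_head Hxw)).
move: Hi; rewrite tpowS => /path_avoids_cons [_]; apply: path_avoids_geq.
by rewrite -catA; have := pe_free (hnn_rels R phi) q [::] t'; rewrite !cats0.
Qed.

Theorem htpy_loop_nil (Hphi : induces_mono R phi) g w :
  loop_avoiding R phi S g w -> htp g w [::].
Proof.
move=> [Hloop Hw].
have Hw1 : w ~ [::] by apply: (pe_cancell (a := g)); rewrite cats0.
have := nf_pe Hphi Hw1; have := htpy_nf Hw.
case: (nf phi w) => [[i X] j] [Hnf Hi] [/= Hij]; rewrite homn_nil => HX.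
have ji : j = i by lia.
rewrite {}ji in Hnf.
apply: ht_trans Hnf _.
have Hgi : ~ S (g ++ tpow i false) by move/path_avoids_tpow: Hi; apply.
apply: ht_trans (htpy_ctxl (htpy_ctxr (tpow i true) (htpy_liftw HX Hgi))) _.
by rewrite /= -invw_tpow; apply: htpy_cancel.
Qed.

End Homotopy.

Section InS.
Variables (T : finType) (R : seq (word T)) (phi : T -> word T) (M N : nat).

Lemma in_S_geq p q : Defs.geq R phi p q -> in_S R phi M N p -> in_S R phi M N q.
Proof.
by move=> Hpq [a [m [Hm Hp]]]; exists a, m; split=> //; apply: pe_trans (pe_sym Hpq) Hp.
Qed.

Lemma in_S_mulA p Z : in_S R phi M N p -> in_S R phi M N (p ++ liftw Z).
Proof.
move=> [a [m [Hm Hp]]]; exists (a ++ homn phi m Z), m; split=> //.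
apply: pe_trans (pe_ctxr _ Hp) _; rewrite liftw_cat -!catA.
exact/pe_ctxl/pe_ctxl/push_down_tpow.
Qed.

End InS.

Theorem theorem5p11 (T : finType) (R : seq (word T)) (phi : T -> word T)
  (Hphi : induces_mono R phi) (M N : nat) (g w : word (hgen T)) :
  loop_avoiding R phi (in_S R phi M N) g w ->
  htpy R phi (in_S R phi M N) g w [::].
Proof.
exact: htpy_loop_nil (@in_S_geq _ R phi M N) (@in_S_mulA _ R phi M N) Hphi _ _.
Qed.
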